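(* Let $G$ be a graph, $r \ge 1$, $L_S=(s_1,\dots,s_n)$ a subordering of $S \subseteq V(G)$, $v \in V(G)\setminus S$ and $s \in S$. Then $s \notin \mathrm{bp}(G,L_S,v)$ if and only if for all $u \in V(G)$, $$\mathrm{Wreach}_r(G,\mathrm{placebefore}(L_S,s,v),u)=\mathrm{Wreach}_r(G,\mathrm{placeafter}(L_S,s,v),u).$$
   Context: All graphs are finite, undirected, without loops. A path has length equal to its number of vertices minus one. A subordering $L_S$ is a linear ordering of $S\subseteq V(G)$; $\preceq_{L_S}$ means precedes or equal. For a subordering $L_S$ and $u,w\in V(G)$, $u\in\mathrm{Wreach}_r(G,L_S,w)$ iff either $u=w$, or $u\in S$ and there is a path $P$ of length at most $r$ between $u$ and $w$ with $u\preceq_{L_S} x$ for all $x\in V(P)\cap S$. For $L_S=(s_1,\dots,s_n)$ and $v\notin S$: $\mathrm{placeafter}(L_S,s_i,v)=(s_1,\dots,s_i,v,s_{i+1},\dots,s_n)$ and $\mathrm{placebefore}(L_S,s_i,v)=(s_1,\dots,s_{i-1},v,s_i,\dots,s_n)$, both suborderings of $S\cup\{v\}$. A vertex $s\in S$ is a breakpoint of $v$ if $\mathrm{Wreach}_r(G,\mathrm{placebefore}(L_S,s,v),v)\ne\mathrm{Wreach}_r(G,\mathrm{placeafter}(L_S,s,v),v)$; $\mathrm{bp}(G,L_S,v)\subseteq S$ denotes the set of breakpoints of $v$. *)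

From mathcomp Require Import all_boot.
Set Implicit Arguments. Unset Strict Implicit. Unset Printing Implicit Defensive.

(* A simple graph on a finite vertex type T is a symmetric irreflexive
   relation e.  A subordering L_S of S is a duplicate-free sequence L
   (S = the elements of L); x precedes-or-equals y iff index x L <= index y L. *)

Definition is_gpath (T : eqType) (e : rel T) (p : seq T) : bool :=
  if p is x :: q then path e x q && uniq p else false.

Definition in_wreach (T : eqType) (e : rel T) (r : nat) (L : seq T) (w u : T) : Prop :=
  u = w \/
  (u \in L /\
   exists p : seq T,
     [/\ is_gpath e (u :: p), last u p = w, size p <= r &
         forall x, x \in u :: p -> x \in L -> index u L <= index x L]).

Definition wreach_eq (T : eqType) (e : rel T) (r : nat) (L1 L2 : seq T) (w : T) : Prop :=
  forall u, in_wreach e r L1 w u <-> in_wreach e r L2 w u.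

Definition placeafter (T : eqType) (L : seq T) (s v : T) : seq T :=
  take (index s L).+1 L ++ v :: drop (index s L).+1 L.

Definition placebefore (T : eqType) (L : seq T) (s v : T) : seq T :=
  take (index s L) L ++ v :: drop (index s L) L.

Definition is_breakpoint (T : eqType) (e : rel T) (r : nat) (L : seq T) (v s : T) : Prop :=
  s \in L /\ ~ wreach_eq e r (placebefore L s v) (placeafter L s v) v.

From mathcomp Require Import all_boot.
From mathcomp Require Import zify.
Set Implicit Arguments. Unset Strict Implicit.

(* The two orders differ only by the transposition of the adjacent vertices v
   and s, so a weak-reachability witness for one order is a witness for the
   other unless it is a path from v through s (witness for v in placebefore)
   or from s through v (witness for s in placeafter).  In both cases the part
   of the path between v and s, reversed if needed, shows that s is weakly
   r-reachable from v in placeafter.  This is impossible when s is not a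
   breakpoint of v: in placebefore, v precedes s, so s is not weakly reachable
   from v there, and the two sets of v agree. *)

Lemma index_cat2 (T : eqType) (A B : seq T) a b x :
  a \notin A -> b \notin A ->
  index x (A ++ a :: b :: B) =
  if x \in A then index x A else if x == a then size A
  else if x == b then (size A).+1 else (size A).+2 + index x B.
Proof.
move=> aA bA; rewrite index_cat; case: ifP => // _ /=.
rewrite [a == x]eq_sym [b == x]eq_sym.
by case: (x == a); last case: (x == b); lia.
Qed.

Lemma index_le_swap (T : eqType) (A B : seq T) a b u x :
  a \notin A -> b \notin A -> a != b -> (u != a) || (x != b) ->
  index u (A ++ a :: b :: B) <= index x (A ++ a :: b :: B) ->
  index u (A ++ b :: a :: B) <= index x (A ++ b :: a :: B).
Proof.
move=> aA bA ab ux; rewrite !index_cat2 //.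
have idxA y : y \in A -> index y A < size A by rewrite index_mem.
case: (boolP (u \in A)) => uA; case: (boolP (x \in A)) => xA //.
- by have := idxA u uA; repeat case: ifP => _; lia.
- by have := idxA x xA; repeat case: ifP => _; lia.
move: ux; have [->|_] := eqVneq u a; have [->|_] := eqVneq x b;
  rewrite ?eqxx // ?[b == a]eq_sym ?(negbTE ab) => _; by repeat case: ifP => _; lia.
Qed.

Lemma gpath_rev (T : eqType) (e : rel T) : symmetric e ->
  forall p, is_gpath e p -> is_gpath e (rev p).
Proof.
move=> e_sym [//|x p] /andP[xp up].
have -> : rev (x :: p) = last x p :: rev (belast x p) by rewrite lastI rev_rcons.
apply/andP; split; last by rewrite -rev_rcons -lastI rev_uniq.
by rewrite rev_path (@eq_path _ _ e) // => a b; rewrite /= e_sym.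
Qed.

Lemma gpath_prefix (T : eqType) (e : rel T) x p y :
  is_gpath e (x :: p) -> y \in p ->
  exists q, [/\ is_gpath e (x :: rcons q y), size q < size p &
                {subset x :: rcons q y <= x :: p}].
Proof.
move=> gp yp; case/path.splitP: yp gp => q p' /andP[].
rewrite cat_path -(cat_cons x) cat_uniq => /andP[gq _] /andP[uq _].
exists q; split; first by apply/andP.
- by rewrite size_cat size_rcons; lia.
- by move=> z; rewrite mem_cat => ->.
Qed.

Section Transposition.
Variables (T : eqType) (e : rel T) (r : nat) (A B : seq T) (v s : T).
Hypotheses (e_sym : symmetric e) (vA : v \notin A) (sA : s \notin A)
  (vs : v != s).

Let L1 := A ++ v :: s :: B.
Let L2 := A ++ s :: v :: B.

Lemma mem_swap x : (x \in L1) = (x \in L2).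
Proof. by rewrite !mem_cat !inE; congr orb; rewrite orbCA. Qed.

Lemma index_le_swap12 u x : (u != v) || (x != s) ->
  index u L1 <= index x L1 -> index u L2 <= index x L2.
Proof. exact: index_le_swap. Qed.

Lemma index_le_swap21 u x : (u != s) || (x != v) ->
  index u L2 <= index x L2 -> index u L1 <= index x L1.
Proof. by apply: index_le_swap; rewrite // eq_sym. Qed.

Lemma index_v_le_swap x : index v L1 <= index x L1 -> index s L2 <= index x L2.
Proof.
rewrite !index_cat2 // (negbTE vA) (negbTE sA) !eqxx.
have idxA : x \in A -> index x A < size A by rewrite index_mem.
by case: (x \in A) idxA => [/(_ isT)|_]; [|case: (x == s); case: (x == v)]; lia.
Qed.

Lemma s_notin_wreach1_v : ~ in_wreach e r L1 v s.
Proof.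
case=> [/eqP|[_ [p [_ pv _ idx_p]]]]; first by rewrite eq_sym (negbTE vs).
have v_p : v \in s :: p by rewrite -pv mem_last.
have := idx_p v v_p; rewrite /L1 !mem_cat !inE eqxx orbT => /(_ isT).
by rewrite !index_cat2 // (negbTE vA) (negbTE sA) !eqxx eq_sym (negbTE vs); lia.
Qed.

Hypothesis s_notin_wreach2_v : ~ in_wreach e r L2 v s.

Lemma in_wreach_swap12 w u : in_wreach e r L1 w u -> in_wreach e r L2 w u.
Proof.
case=> [->|[uL [p [gp pw pr idx_p]]]]; first by left.
right; split; first by rewrite -mem_swap.
have [uv|uv] := eqVneq u v; last first.
  exists p; split=> // x xp xL; apply: index_le_swap12; first by rewrite uv.
  by apply: idx_p; rewrite ?mem_swap.
subst u; have [sp|sp] := boolP (s \in p); last first.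
  exists p; split=> // x xp xL; apply: index_le_swap12.
    by rewrite eqxx; apply/eqP => xs; move: xp sp; rewrite xs inE eq_sym (negbTE vs) /= => ->.
  by apply: idx_p; rewrite ?mem_swap.
exfalso; apply: s_notin_wreach2_v; right; split; first by rewrite !mem_cat !inE eqxx orbT.
have [q [gq qp sub_q]] := gpath_prefix gp sp.
exists (rcons (rev q) v); split.
- by have := gpath_rev e_sym gq; rewrite rev_cons rev_rcons.
- by rewrite last_rcons.
- by rewrite size_rcons size_rev; lia.
move=> x xq xL; apply: index_v_le_swap; apply: idx_p; last by rewrite mem_swap.
by apply: sub_q; move: xq; rewrite -rcons_cons !(mem_rcons, inE, mem_rev) orbCA.
Qed.

Lemma in_wreach_swap21 w u : in_wreach e r L2 w u -> in_wreach e r L1 w u.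
Proof.
case=> [->|[uL [p [gp pw pr idx_p]]]]; first by left.
right; split; first by rewrite mem_swap.
have [us|us] := eqVneq u s; last first.
  exists p; split=> // x xp xL; apply: index_le_swap21; first by rewrite us.
  by apply: idx_p; rewrite -?mem_swap.
subst u; have [vp|vp] := boolP (v \in p); last first.
  exists p; split=> // x xp xL; apply: index_le_swap21.
    by rewrite eqxx; apply/eqP => xv; move: xp vp; rewrite xv inE (negbTE vs) /= => ->.
  by apply: idx_p; rewrite -?mem_swap.
exfalso; apply: s_notin_wreach2_v; right; split=> //.
have [q [gq qp sub_q]] := gpath_prefix gp vp.
exists (rcons q v); split=> //; first by rewrite last_rcons.
- by rewrite size_rcons; lia.
by move=> x xq xL; apply: idx_p => //; apply: sub_q.
Qed.

Lemma wreach_eq_swap w : wreach_eq e r L1 L2 w.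
Proof. by move=> u; split; [apply: in_wreach_swap12 | apply: in_wreach_swap21]. Qed.

End Transposition.

Lemma index_cat_notin (T : eqType) (A B : seq T) s :
  s \notin A -> index s (A ++ s :: B) = size A.
Proof. by move=> sA; rewrite index_cat (negbTE sA) /= eqxx addn0. Qed.

Lemma placebefore_cat (T : eqType) (A B : seq T) s v :
  s \notin A -> placebefore (A ++ s :: B) s v = A ++ v :: s :: B.
Proof.
by move=> sA; rewrite /placebefore index_cat_notin // take_size_cat // drop_size_cat.
Qed.

Lemma placeafter_cat (T : eqType) (A B : seq T) s v :
  s \notin A -> placeafter (A ++ s :: B) s v = A ++ s :: v :: B.
Proof.
move=> sA; rewrite /placeafter index_cat_notin // take_cat drop_cat ltnNge leqnSn subSnn /=.
by rewrite take0 drop0 -catA.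
Qed.

Theorem lemma4 (T : finType) (e : rel T) (He_sym : symmetric e)
  (He_irr : irreflexive e) (r : nat) (Hr : 1 <= r) (L : seq T)
  (HL : uniq L) (v s : T) (Hv : v \notin L) (Hs : s \in L) :
  ~ is_breakpoint e r L v s <->
  (forall u : T, wreach_eq e r (placebefore L s v) (placeafter L s v) u).
Proof.
move: HL Hv; case/path.splitPr: L / Hs => A B HL Hv.
have sA : s \notin A.
  by move: HL; rewrite cat_uniq => /and3P[_ /hasPn/(_ s (mem_head s B))].
have vA : v \notin A by apply: contra Hv; rewrite mem_cat => ->.
have vs : v != s by apply: contraNneq Hv => ->; rewrite mem_cat mem_head orbT.
rewrite placebefore_cat // placeafter_cat //.
split=> [not_bp|same_wreach]; last first.
  by case=> _; rewrite placebefore_cat // placeafter_cat //; apply.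
apply: wreach_eq_swap => // s_wreach_v.
apply: not_bp; split; first by rewrite mem_cat mem_head orbT.
rewrite placebefore_cat // placeafter_cat // => same_v.
exact: s_notin_wreach1_v vA sA vs (proj2 (same_v s) s_wreach_v).
Qed.
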